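(* Let $n_1<n_2<n_3$ be positive integers with $\gcd(n_1,n_2,n_3)=1$ minimally generating a nonsymmetric numerical semigroup $S$, with $\gcd(\delta_1,\delta_3)=1$. Let $\mathbf x\in\{\boldsymbol\lambda,\boldsymbol\mu\}$ and let $1\le i\le\max\{\delta_1,\delta_3\}$ be such that the B\'ezout couple $\mathbf x_i$ (of type $\mathbf x$) is reducible. Then there exists a positive integer $l<i$ such that $\tau_{\mathbf x_l}^+\le\tau_{\mathbf x_i}^+$ (componentwise), where $\mathbf x_l$ is the B\'ezout couple of $l$ of the same type.
   Context: $S=\langle n_1,n_2,n_3\rangle$; minimally generated means no $n_i$ lies in the submonoid generated by the other two; $S$ is symmetric if, with $F=\max(\mathbb Z\setminus S)$, $x\in\mathbb Z\setminus S$ implies $F-x\in S$. For $\{i,j,k\}=\{1,2,3\}$, $c_i=\min\{c\in\mathbb Z^+: cn_i\in\langle n_j,n_k\rangle\}$ and, $S$ being nonsymmetric, $r_{ij},r_{ik}$ are the unique positive integers with $c_in_i=r_{ij}n_j+r_{ik}n_k$; moreover $c_i=r_{ji}+r_{ki}$. Set $\delta_1=c_1-r_{12}-r_{13}>0$, $\delta_3=r_{31}+r_{32}-c_3>0$, $\mathbf v_1=(c_1,-r_{12},-r_{13})$, $\mathbf v_3=(r_{31},r_{32},-c_3)$. For $i\in\{1,\ldots,\max\{\delta_1,\delta_3\}\}$: $\boldsymbol\lambda_i$ is the unique $(a,b)\in\mathbb Z^2$ with $a\delta_1+b\delta_3=i$, $0<b\le\delta_1$; $\boldsymbol\mu_i$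 is the unique $(a,b)$ with $a\delta_1+b\delta_3=i$, $0<a\le\delta_3$. $\boldsymbol\lambda_i$ is reducible if $\boldsymbol\lambda_i=\boldsymbol\lambda_j+\boldsymbol\lambda_k$ for some $j,k\in\{1,\ldots,\max\{\delta_1,\delta_3\}\}$, and similarly for $\boldsymbol\mu_i$. For $(a,b)\in\mathbb Z^2$, $\tau_{(a,b)}=a\mathbf v_1+b\mathbf v_3\in\mathbb Z^3$. For $\mathbf z\in\mathbb Z^3$, $\mathbf z^+,\mathbf z^-\in\mathbb N^3$ are the unique vectors with $\mathbf z=\mathbf z^+-\mathbf z^-$ and $\mathbf z^+\cdot\mathbf z^-=0$. *)

From mathcomp Require Import all_boot all_order all_algebra.
Set Implicit Arguments. Unset Strict Implicit. Unset Printing Implicit Defensive.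
Import Order.TTheory GRing.Theory Num.Theory.
Local Open Scope ring_scope.

Definition in_sg3 (n1 n2 n3 : nat) (x : int) : Prop :=
  exists a b c : nat, x = ((a * n1 + b * n2 + c * n3)%N)%:Z.

Definition in_sg2 (m1 m2 x : nat) : Prop :=
  exists a b : nat, x = (a * m1 + b * m2)%N.

Definition min_gen (n1 n2 n3 : nat) : Prop :=
  ~ in_sg2 n2 n3 n1 /\ ~ in_sg2 n1 n3 n2 /\ ~ in_sg2 n1 n2 n3.

Definition sg_symmetric (n1 n2 n3 : nat) : Prop :=
  exists F : int, ~ in_sg3 n1 n2 n3 F
    /\ (forall x : int, F < x -> in_sg3 n1 n2 n3 x)
    /\ (forall x : int, ~ in_sg3 n1 n2 n3 x -> in_sg3 n1 n2 n3 (F - x)).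

Definition is_c (ni nj nk c : nat) : Prop :=
  (0 < c)%N /\ in_sg2 nj nk (c * ni)
  /\ forall c' : nat, (0 < c')%N -> in_sg2 nj nk (c' * ni) -> (c <= c')%N.

Definition delta1 (c1 r12 r13 : nat) : int := c1%:Z - r12%:Z - r13%:Z.
Definition delta3 (c3 r31 r32 : nat) : int := r31%:Z + r32%:Z - c3%:Z.

Inductive btype := Lam | Mu.

Definition bezout (t : btype) (d1 d3 i : int) (x : int * int) : Prop :=
  x.1 * d1 + x.2 * d3 = i /\
  match t with
  | Lam => 0 < x.2 <= d1
  | Mu => 0 < x.1 <= d3
  end.

Definition reducible (t : btype) (d1 d3 : int) (x : int * int) : Prop :=
  exists j k : int,
    1 <= j <= Num.max d1 d3 /\ 1 <= k <= Num.max d1 d3 /\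
    exists y z : int * int,
      bezout t d1 d3 j y /\ bezout t d1 d3 k z /\ x = (y.1 + z.1, y.2 + z.2).

Definition vec3 := (int * int * int)%type.

Definition tau (v1 v3 : vec3) (x : int * int) : vec3 :=
  (x.1 * v1.1.1 + x.2 * v3.1.1, x.1 * v1.1.2 + x.2 * v3.1.2,
   x.1 * v1.2 + x.2 * v3.2).

Definition vpos (z : vec3) : vec3 :=
  (Num.max z.1.1 0, Num.max z.1.2 0, Num.max z.2 0).

Definition vle (z w : vec3) : Prop :=
  z.1.1 <= w.1.1 /\ z.1.2 <= w.1.2 /\ z.2 <= w.2.

From mathcomp Require Import all_boot all_order all_algebra.
From mathcomp Require Import zify ring.
Set Implicit Arguments. Unset Strict Implicit. Unset Printing Implicit Defensive.
Import Order.TTheory GRing.Theory Num.Theory.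
Local Open Scope ring_scope.

(* Both v1 and v3, hence every tau_(a,b), are orthogonal to n = (n1,n2,n3), and
   the coordinates of tau_(a,b) sum to a delta1 + b delta3.  For a Bezout couple
   of i <= max(delta1, delta3) the coefficients a, b cannot both be positive, so
   the type of the couple fixes the sign of the middle coordinate of tau; for a
   vector orthogonal to n with positive coordinate sum, that sign in turn fixes
   the sign of one outer coordinate, since n1 < n2 < n3.  Hence if x = y + z is
   reducible, tau_y and tau_z agree in sign on two coordinates, and whichever of
   them is smaller on the third has its positive part below that of tau_x. *)

Definition vadd (u w : vec3) : vec3 := (u.1.1 + w.1.1, u.1.2 + w.1.2, u.2 + w.2).
Definition vsum (u : vec3) : int := u.1.1 + u.1.2 + u.2.
Definition vdot (u w : vec3) : int := u.1.1 * w.1.1 + u.1.2 * w.1.2 + u.2 * w.2.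

Lemma vaddC : commutative vadd.
Proof. by move=> u w; rewrite /vadd addrC [u.1.2 + _]addrC [u.2 + _]addrC. Qed.

Lemma tau_add (v1 v3 : vec3) (y z : int * int) :
  tau v1 v3 (y.1 + z.1, y.2 + z.2) = vadd (tau v1 v3 y) (tau v1 v3 z).
Proof. by rewrite /tau /vadd /=; congr (_, _, _); ring. Qed.

Lemma vsum_tau (v1 v3 : vec3) (w : int * int) :
  vsum (tau v1 v3 w) = w.1 * vsum v1 + w.2 * vsum v3.
Proof. by rewrite /vsum /tau /=; ring. Qed.

Lemma vdot_tau (v1 v3 n : vec3) (w : int * int) :
  vdot (tau v1 v3 w) n = w.1 * vdot v1 n + w.2 * vdot v3 n.
Proof. by rewrite /vdot /tau /=; ring. Qed.

Lemma max0_le_addr (R : realDomainType) (a b : R) :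
  a <= 0 \/ 0 <= b -> Num.max a 0 <= Num.max (a + b) 0.
Proof.
rewrite ge_max !le_max lexx orbT andbT.
by case=> [-> | b_ge0]; rewrite ?orbT // lerDl b_ge0.
Qed.

Lemma vpos_le_vadd (u w : vec3) :
  u.1.1 <= 0 \/ 0 <= w.1.1 -> u.1.2 <= 0 \/ 0 <= w.1.2 -> u.2 <= 0 \/ 0 <= w.2 ->
  vle (vpos u) (vpos (vadd u w)).
Proof. by move=> h1 h2 h3; split; [|split]; apply: max0_le_addr. Qed.

Definition sign_pattern (t : btype) (u : vec3) : Prop :=
  match t with
  | Lam => 0 <= u.1.2 /\ u.2 <= 0
  | Mu => 0 <= u.1.1 /\ u.1.2 <= 0
  end.

Lemma vpos_le_vadd_sign (t : btype) (u w : vec3) :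
  sign_pattern t u -> sign_pattern t w ->
  vle (vpos u) (vpos (vadd u w)) \/ vle (vpos w) (vpos (vadd u w)).
Proof.
case: t => /= -[u_a u_b] [w_a w_b].
- case: (lerP u.1.1 w.1.1) => h; [left | right; rewrite vaddC];
    apply: vpos_le_vadd; lia.
- case: (lerP u.2 w.2) => h; [left | right; rewrite vaddC];
    apply: vpos_le_vadd; lia.
Qed.

Section OrthogonalSigns.

Variables (n1 n2 n3 : int) (u : vec3).
Hypotheses (n1_gt0 : 0 < n1) (n12 : n1 < n2) (n23 : n2 < n3).
Hypotheses (u_orth : vdot u (n1, n2, n3) = 0) (u_sum_gt0 : 0 < vsum u).

Lemma orth_mid_ge0_last_lt0 : 0 <= u.1.2 -> u.2 < 0.
Proof.
have : u.1.2 * (n2 - n1) + u.2 * (n3 - n1) = vdot u (n1, n2, n3) - vsum u * n1.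
  by rewrite /vdot /vsum /=; ring.
rewrite u_orth; nia.
Qed.

Lemma orth_mid_le0_first_gt0 : u.1.2 <= 0 -> 0 < u.1.1.
Proof.
have : u.1.1 * (n3 - n1) + u.1.2 * (n3 - n2) = vsum u * n3 - vdot u (n1, n2, n3).
  by rewrite /vdot /vsum /=; ring.
rewrite u_orth; nia.
Qed.

End OrthogonalSigns.

Section BezoutTau.

Variables (n1 n2 n3 : int) (v1 v3 : vec3).
Hypotheses (n1_gt0 : 0 < n1) (n12 : n1 < n2) (n23 : n2 < n3).
Hypotheses (v1_orth : vdot v1 (n1, n2, n3) = 0) (v3_orth : vdot v3 (n1, n2, n3) = 0).
Hypotheses (v1_mid_le0 : v1.1.2 <= 0) (v3_mid_ge0 : 0 <= v3.1.2).
Hypotheses (d1_gt0 : 0 < vsum v1) (d3_gt0 : 0 < vsum v3).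

Local Notation d1 := (vsum v1).
Local Notation d3 := (vsum v3).

Lemma bezout_sign_pattern (t : btype) (l : int) (w : int * int) :
  bezout t d1 d3 l w -> 0 < l -> l <= Num.max d1 d3 ->
  sign_pattern t (tau v1 v3 w).
Proof.
move=> [ew hw] l_gt0 l_le.
have max_lt : Num.max d1 d3 < d1 + d3 by rewrite gt_max; lia.
have not_both : w.1 <= 0 \/ w.2 <= 0 by nia.
have orth : vdot (tau v1 v3 w) (n1, n2, n3) = 0.
  by rewrite vdot_tau v1_orth v3_orth !mulr0 addr0.
have sum_gt0 : 0 < vsum (tau v1 v3 w) by rewrite vsum_tau ew.
case: t hw => /= hw.
- have mid : 0 <= (tau v1 v3 w).1.2 by rewrite /=; nia.
  by split=> //; apply: ltW; exact: (orth_mid_ge0_last_lt0 n1_gt0 n12 n23 orth sum_gt0 mid).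
- have mid : (tau v1 v3 w).1.2 <= 0 by rewrite /=; nia.
  by split=> //; apply: ltW; exact: (orth_mid_le0_first_gt0 n1_gt0 n12 n23 orth sum_gt0 mid).
Qed.

Lemma reducible_tau_pos_le (t : btype) (i : int) (x : int * int) :
  bezout t d1 d3 i x -> reducible t d1 d3 x ->
  exists l : int, 0 < l < i /\
    exists y : int * int,
      bezout t d1 d3 l y /\ vle (vpos (tau v1 v3 y)) (vpos (tau v1 v3 x)).
Proof.
move=> [ex _] [j [k [/andP[j_ge1 j_le] [/andP[k_ge1 k_le] [y [z [By [Bz x_yz]]]]]]]].
have i_jk : i = j + k.
  by case: By => <- _; case: Bz => <- _; rewrite -ex x_yz /=; ring.
have sy := bezout_sign_pattern By ltac:(lia) j_le.
have sz := bezout_sign_pattern Bz ltac:(lia) k_le.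
rewrite x_yz tau_add.
case: (vpos_le_vadd_sign sy sz) => [le_y | le_z].
- by exists j; split; [lia | exists y].
- by exists k; split; [lia | exists z].
Qed.

End BezoutTau.

Theorem lemma2p14 (n1 n2 n3 c1 c3 r12 r13 r31 r32 : nat) (t : btype)
    (i : int) (x : int * int) :
  (0 < n1)%N -> (n1 < n2)%N -> (n2 < n3)%N ->
  gcdn (gcdn n1 n2) n3 = 1%N ->
  min_gen n1 n2 n3 ->
  ~ sg_symmetric n1 n2 n3 ->
  is_c n1 n2 n3 c1 -> is_c n3 n1 n2 c3 ->
  (0 < r12)%N -> (0 < r13)%N -> (c1 * n1 = r12 * n2 + r13 * n3)%N ->
  (0 < r31)%N -> (0 < r32)%N -> (c3 * n3 = r31 * n1 + r32 * n2)%N ->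
  gcdz (delta1 c1 r12 r13) (delta3 c3 r31 r32) = 1 ->
  1 <= i <= Num.max (delta1 c1 r12 r13) (delta3 c3 r31 r32) ->
  bezout t (delta1 c1 r12 r13) (delta3 c3 r31 r32) i x ->
  reducible t (delta1 c1 r12 r13) (delta3 c3 r31 r32) x ->
  exists l : int, 0 < l < i /\
    exists y : int * int,
      bezout t (delta1 c1 r12 r13) (delta3 c3 r31 r32) l y /\
      vle (vpos (tau (c1%:Z, - r12%:Z, - r13%:Z) (r31%:Z, r32%:Z, - c3%:Z) y))
          (vpos (tau (c1%:Z, - r12%:Z, - r13%:Z) (r31%:Z, r32%:Z, - c3%:Z) x)).
Proof.
move=> n1_gt0 n12 n23 _ _ _ _ _ r12_gt0 r13_gt0 e1 r31_gt0 r32_gt0 e3 _ _ Bx R.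
have d1_gt0 : 0 < delta1 c1 r12 r13.
  have : (r12 + r13 < c1)%N by nia.
  by rewrite /delta1; lia.
have d3_gt0 : 0 < delta3 c3 r31 r32.
  have : (c3 < r31 + r32)%N by nia.
  by rewrite /delta3; lia.
have v1_orth : vdot (c1%:Z, - r12%:Z, - r13%:Z) (n1%:Z, n2%:Z, n3%:Z) = 0.
  by rewrite /vdot /=; lia.
have v3_orth : vdot (r31%:Z, r32%:Z, - c3%:Z) (n1%:Z, n2%:Z, n3%:Z) = 0.
  by rewrite /vdot /=; lia.
by apply: (reducible_tau_pos_le _ _ _ v1_orth v3_orth _ _ d1_gt0 d3_gt0 Bx R);
  rewrite /=; lia.
Qed.
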